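(* Consider the semantic collaboration (SC) methodology described in the context. Every program that satisfies the proof obligations of SC (every class invariant is admissible, and every heap update instruction executed by the program is executed in a state satisfying its precondition) satisfies, in every reachable heap, both $$\forall o:\ o.\mathit{closed}\Rightarrow o.\mathit{inv}\qquad\text{(G1)}$$ and $$\forall o,p:\ p.\mathit{closed}\wedge o\in p.\mathit{owns}\Rightarrow o.\mathit{closed}\wedge o.\mathit{owner}=p.\qquad\text{(G2)}$$
   Context: Programs are collections of classes; every object is equipped with built-in ghost attributes $\mathit{closed}$ (Boolean), $\mathit{owner}$ (object), and sets of objects $\mathit{owns}$, $\mathit{subjects}$, $\mathit{observers}$, besides its class-specific attributes. Shorthands: $o.\mathit{open}$ means $\neg o.\mathit{closed}$; $o.\mathit{free}$ means $o.\mathit{owner}.\mathit{open}$; $o.\mathit{wrapped}$ means $o.\mathit{closed}\wedge o.\mathit{free}$. A special object $\mathit{Void}$ is always allocated and open; initially it is the only allocated object. Every class has an invariant $\mathit{inv}$ (a Boolean expression over $\mathit{Current}$, the object it is evaluated on). The read set $\mathrm{reads}(e)$ of an expression $e$ is the set of objects whose attributes $e$ reads: $\mathrm{reads}(x.a)=\{x\}$, for a call to a logical (side-effect free) function it is given by that function's read clause, and for compound expressions it is the union over subexpressions; the value of $e$ depends only on the attributes of objects in $\mathrm{reads}(e)$. Each attribute $a$ has an update guard $\mathrm{guard}(s.a := y, o)$, a Boolean expression over the updated object $s$, the new value $y$, and a generic observer $o$. For a heap $h$, $e_h$ is the value of $e$ in $h$, and $h[x.a\mapsto y]$ is $h$ with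 $x.a$ changed to $y$; $\mathsf{H}$ is the current heap. An invariant $\mathit{inv}$ is admissible iff: (A1) $\mathit{inv}\Rightarrow \mathrm{reads}(\mathit{inv})\subseteq \{\mathit{Current}\}\cup\mathit{owns}\cup\mathit{subjects}$; (A2) $\mathit{inv}\Rightarrow \forall s: s\in\mathit{subjects}\Rightarrow \mathit{Current}\in s.\mathit{observers}$; (A3) $\forall s,a,y:\ s\in\mathit{subjects}\wedge\mathit{inv}\wedge \mathrm{guard}(s.a:=y,\mathit{Current})\Rightarrow \mathit{inv}_{\mathsf{H}[s.a\mapsto y]}$; (A4) $\mathit{inv}$ does not mention the attributes $\mathit{closed}$ and $\mathit{owner}$, directly or through the definitions of logical functions it uses. Heap update instructions (each modifies only the objects/attributes mentioned in its postcondition): allocation $\mathbf{create}\ x$: precondition True; postcondition $x.\mathit{open}\wedge x.\mathit{owner}=\mathit{Void}\wedge x.\mathit{observers}=\{\}$. Unwrapping $x.\mathit{unwrap}$: precondition $x.\mathit{wrapped}$; postcondition $x.\mathit{open}$. Attribute update $x.a:=y$ for $a\neq\mathit{closed}$ (and $a\ne\mathit{owner}$): preconditions $x.\mathit{open}$ and $\forall o\in x.\mathit{observers}: o.\mathit{open}\vee\mathrm{guard}(x.a:=y,o)$; postcondition $x.a=y$. Wrapping $x.\mathit{wrap}$: preconditions $x.\mathit{open}$, $x.\mathit{inv}$, and $\forall o\in x.\mathit{owns}: o.\mathit{wrapped}$; postconditions $x.\mathit{wrapped}$ and $\forall o\in x.\mathit{owns}: o.\mathit{owner}=x$ (it first sets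 the $\mathit{owner}$ attribute of every object in $x.\mathit{owns}$ and then sets $x.\mathit{closed}$). The attributes $\mathit{closed}$ and $\mathit{owner}$ are changed only by $\mathit{wrap}$ and $\mathit{unwrap}$. Objects are never deallocated. *)

From Stdlib Require Import ClassicalEpsilon.

Set Implicit Arguments.

(* Sets of objects are predicates:  owns h p o  means
   o \in p.owns  (similarly for subjects / observers). *)
Record heap (Obj F V : Type) := Heap {
  alloc     : Obj -> bool;
  closed    : Obj -> bool;
  owner     : Obj -> Obj;
  owns      : Obj -> Obj -> Prop;
  subjects  : Obj -> Obj -> Prop;
  observers : Obj -> Obj -> Prop;
  fld       : Obj -> F -> V }.

Arguments Heap {Obj F V}.

(* An attribute update "a := y" for an attribute a other than closed/owner:
   the attribute together with its new value. *)
Inductive upd (Obj F V : Type) :=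
  | UOwns (S : Obj -> Prop)
  | USubjects (S : Obj -> Prop)
  | UObservers (S : Obj -> Prop)
  | UField (f : F) (v : V).

Arguments UOwns {Obj F V}.
Arguments USubjects {Obj F V}.
Arguments UObservers {Obj F V}.
Arguments UField {Obj F V}.

Definition ite_eq {Obj A : Type} (x o : Obj) (a b : A) : A :=
  if excluded_middle_informative (o = x) then a else b.


Definition is_open {Obj F V} (h : heap Obj F V) (o : Obj) : Prop := closed h o = false.
Definition is_free {Obj F V} (h : heap Obj F V) (o : Obj) : Prop := is_open h (owner h o).
Definition is_wrapped {Obj F V} (h : heap Obj F V) (o : Obj) : Prop :=
  closed h o = true /\ is_free h o.

Definition set_attr {Obj F V} (h : heap Obj F V) (x : Obj) (u : upd Obj F V) : heap Obj F V :=
  match u with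
  | UOwns T => Heap (alloc h) (closed h) (owner h)
      (fun o => ite_eq x o T (owns h o)) (subjects h) (observers h) (fld h)
  | USubjects T => Heap (alloc h) (closed h) (owner h)
      (owns h) (fun o => ite_eq x o T (subjects h o)) (observers h) (fld h)
  | UObservers T => Heap (alloc h) (closed h) (owner h)
      (owns h) (subjects h) (fun o => ite_eq x o T (observers h o)) (fld h)
  | UField f v => Heap (alloc h) (closed h) (owner h)
      (owns h) (subjects h) (observers h)
      (fun o g => if excluded_middle_informative (o = x /\ g = f) then v else fld h o g)
  end.

Definition create_heap {Obj F V} (Void : Obj) (h : heap Obj F V) (x : Obj) : heap Obj F V :=
  Heap (fun o => ite_eq x o true (alloc h o))
       (fun o => ite_eq x o false (closed h o))
       (fun o => ite_eq x o Void (owner h o))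
       (owns h) (subjects h)
       (fun o => ite_eq x o (fun _ => False) (observers h o))
       (fld h).

Definition unwrap_heap {Obj F V} (h : heap Obj F V) (x : Obj) : heap Obj F V :=
  Heap (alloc h) (fun o => ite_eq x o false (closed h o)) (owner h)
       (owns h) (subjects h) (observers h) (fld h).

Definition wrap_heap {Obj F V} (h : heap Obj F V) (x : Obj) : heap Obj F V :=
  Heap (alloc h) (fun o => ite_eq x o true (closed h o))
       (fun o => if excluded_middle_informative (owns h x o) then x else owner h o)
       (owns h) (subjects h) (observers h) (fld h).

(* One heap update instruction executed in a state satisfying its precondition.
   inv o h : o.inv in heap h;  guard h s u o : guard(s.a := y, o) evaluated in h
   (u packs the attribute a and the new value y). *)
Inductive step {Obj F V} (Void : Obj) (inv : Obj -> heap Obj F V -> Prop)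
    (guard : heap Obj F V -> Obj -> upd Obj F V -> Obj -> Prop)
    : heap Obj F V -> heap Obj F V -> Prop :=
  | step_create h x :
      alloc h x = false ->
      step Void inv guard h (create_heap Void h x)
  | step_unwrap h x :
      alloc h x = true -> is_wrapped h x ->
      step Void inv guard h (unwrap_heap h x)
  | step_update h x u :
      alloc h x = true -> is_open h x ->
      (forall o, observers h x o -> is_open h o \/ guard h x u o) ->
      step Void inv guard h (set_attr h x u)
  | step_wrap h x :
      alloc h x = true -> is_open h x -> inv x h ->
      (forall o, owns h x o -> is_wrapped h o) ->
      step Void inv guard h (wrap_heap h x).

Definition initial_heap {Obj F V} (Void : Obj) (h : heap Obj F V) : Prop :=
  (forall o, alloc h o = true <-> o = Void) /\
  (forall o, closed h o = false) /\
  (forall o, o <> Void -> forall p, ~ observers h o p).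

Inductive reachable {Obj F V} (Void : Obj) (inv : Obj -> heap Obj F V -> Prop)
    (guard : heap Obj F V -> Obj -> upd Obj F V -> Obj -> Prop)
    : heap Obj F V -> Prop :=
  | reach_init h : initial_heap Void h -> reachable Void inv guard h
  | reach_step h h' : reachable Void inv guard h -> step Void inv guard h h' ->
      reachable Void inv guard h'.

Definition same_obj {Obj F V} (h h' : heap Obj F V) (x : Obj) : Prop :=
  alloc h x = alloc h' x /\ closed h x = closed h' x /\ owner h x = owner h' x /\
  owns h x = owns h' x /\ subjects h x = subjects h' x /\
  observers h x = observers h' x /\ fld h x = fld h' x.

Definition same_but_closed_owner {Obj F V} (h h' : heap Obj F V) : Prop :=
  alloc h = alloc h' /\ owns h = owns h' /\ subjects h = subjects h' /\
  observers h = observers h' /\ fld h = fld h'.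

(* reads o h : the read set of o.inv in heap h; the value of o.inv depends only
   on the attributes of objects in the read set. *)
Definition reads_sound {Obj F V} (inv : Obj -> heap Obj F V -> Prop)
    (reads : Obj -> heap Obj F V -> Obj -> Prop) : Prop :=
  forall o h h', (forall x, reads o h x -> same_obj h h' x) -> (inv o h <-> inv o h').

Definition admissible {Obj F V} (inv : Obj -> heap Obj F V -> Prop)
    (reads : Obj -> heap Obj F V -> Obj -> Prop)
    (guard : heap Obj F V -> Obj -> upd Obj F V -> Obj -> Prop) (o : Obj) : Prop :=
  (forall h, inv o h -> forall x, reads o h x -> x = o \/ owns h o x \/ subjects h o x) /\
  (forall h, inv o h -> forall s, subjects h o s -> observers h s o) /\
  (forall h s u, subjects h o s -> inv o h -> guard h s u o -> inv o (set_attr h s u)) /\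
  (* A4 (semantically: o.inv does not depend on closed / owner) *)
  (forall h h', same_but_closed_owner h h' -> (inv o h <-> inv o h')).

(* Strengthen (G1) /\ (G2) by "unallocated objects are open and unobserved"
   and show the strengthened invariant holds initially and is preserved by
   every instruction.  The crux is that a closed object [o] only reads
   itself, the objects it owns (which are closed by G2) and its subjects
   (which observe it by A2).  So an instruction touching an open object [x]
   cannot change [o.inv] unless [x] is a subject of [o]; in that case [x]'s
   observer [o] is closed, the precondition yields the update guard, and A3
   applies.  Newly created objects are never read, being neither closed nor
   observed, and wrap/unwrap only change [closed] and [owner], which no
   invariant mentions (A4). *)
From Stdlib Require Import Classical ClassicalEpsilon FunctionalExtensionality.

Set Implicit Arguments.

Lemma ite_eq_same {Obj A : Type} (x : Obj) (a b : A) : ite_eq x x a b = a.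
Proof. unfold ite_eq; destruct (excluded_middle_informative (x = x)); congruence. Qed.

Lemma ite_eq_other {Obj A : Type} (x o : Obj) (a b : A) : o <> x -> ite_eq x o a b = b.
Proof. intro Hne; unfold ite_eq; destruct (excluded_middle_informative (o = x)); congruence. Qed.

Section SetAttr.

Variables (Obj F V : Type) (h : heap Obj F V) (x : Obj) (u : upd Obj F V).

Lemma set_attr_alloc : alloc (set_attr h x u) = alloc h.
Proof. destruct u; reflexivity. Qed.

Lemma set_attr_closed : closed (set_attr h x u) = closed h.
Proof. destruct u; reflexivity. Qed.

Lemma set_attr_owner : owner (set_attr h x u) = owner h.
Proof. destruct u; reflexivity. Qed.

Lemma set_attr_owns_other p : p <> x -> owns (set_attr h x u) p = owns h p.
Proof. intro Hne; destruct u; simpl; rewrite ?ite_eq_other; auto. Qed.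

Lemma set_attr_observers_other p : p <> x -> observers (set_attr h x u) p = observers h p.
Proof. intro Hne; destruct u; simpl; rewrite ?ite_eq_other; auto. Qed.

Lemma set_attr_same_obj y : y <> x -> same_obj h (set_attr h x u) y.
Proof.
  intro Hne; destruct u; unfold same_obj; simpl; rewrite ?ite_eq_other by exact Hne;
    repeat split.
  apply functional_extensionality; intro g.
  destruct (excluded_middle_informative (y = x /\ g = f)) as [[? _]|]; congruence.
Qed.

End SetAttr.

Lemma create_heap_same_obj {Obj F V} (Void : Obj) (h : heap Obj F V) x y :
  y <> x -> same_obj h (create_heap Void h x) y.
Proof.
  intros Hne; unfold same_obj; simpl; rewrite !ite_eq_other by exact Hne;
    repeat split.
Qed.

Lemma closed_unwrap_heap {Obj F V} {h : heap Obj F V} {x o : Obj} :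
  closed (unwrap_heap h x) o = true -> closed h o = true.
Proof.
  simpl; destruct (classic (o = x)) as [->|Hne].
  - rewrite ite_eq_same; discriminate.
  - rewrite ite_eq_other by exact Hne; auto.
Qed.

Lemma closed_wrap_heap {Obj F V} {h : heap Obj F V} {x o : Obj} :
  closed (wrap_heap h x) o = true -> o = x \/ closed h o = true.
Proof.
  simpl; destruct (classic (o = x)) as [->|Hne]; auto.
  rewrite ite_eq_other by exact Hne; auto.
Qed.

Section Soundness.

Variables (Obj F V : Type) (Void : Obj).
Variable inv : Obj -> heap Obj F V -> Prop.
Variable reads : Obj -> heap Obj F V -> Obj -> Prop.
Variable guard : heap Obj F V -> Obj -> upd Obj F V -> Obj -> Prop.
Hypothesis reads_inv : reads_sound inv reads.
Hypothesis inv_admissible : forall o, admissible inv reads guard o.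

Record sc_invariant (h : heap Obj F V) : Prop := {
  closed_inv : forall o, closed h o = true -> inv o h;
  closed_owns : forall o p, closed h p = true -> owns h p o ->
    closed h o = true /\ owner h o = p;
  unallocated_open : forall o, alloc h o = false -> is_open h o;
  unallocated_unobserved : forall o, alloc h o = false -> forall p, ~ observers h o p }.

Lemma reads_closed h o x : sc_invariant h -> closed h o = true -> reads o h x ->
  x = o \/ closed h x = true \/ (subjects h o x /\ observers h x o).
Proof.
  intros I Ho Hr; pose proof (closed_inv I o Ho) as Hinv.
  destruct (inv_admissible o) as [A1 [A2 _]].
  destruct (A1 h Hinv x Hr) as [->|[Hown|Hsub]].
  - left; reflexivity.
  - right; left; exact (proj1 (closed_owns I x o Ho Hown)).
  - right; right; exact (conj Hsub (A2 h Hinv x Hsub)).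
Qed.

Lemma reads_closed_allocated h o x : sc_invariant h -> closed h o = true -> reads o h x ->
  alloc h x = true.
Proof.
  intros I Ho Hr; destruct (alloc h x) eqn:Hx; [reflexivity|].
  destruct (reads_closed I Ho Hr) as [->|[Hc|[_ Hobs]]].
  - rewrite (unallocated_open I o Hx) in Ho; discriminate.
  - rewrite (unallocated_open I x Hx) in Hc; discriminate.
  - destruct (unallocated_unobserved I x Hx o Hobs).
Qed.

Lemma closed_inv_change_closed_owner h h' o :
  same_but_closed_owner h h' -> inv o h -> inv o h'.
Proof. intros Hs; destruct (inv_admissible o) as [_ [_ [_ A4]]]; apply (A4 h h' Hs). Qed.

Lemma sc_invariant_initial h : initial_heap Void h -> sc_invariant h.
Proof.
  intros [Halloc [Hopen Hobs]]; constructor.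
  - intros o Ho; rewrite Hopen in Ho; discriminate.
  - intros o p Hp; rewrite Hopen in Hp; discriminate.
  - intros o _; apply Hopen.
  - intros o Ho; apply Hobs; intros ->.
    rewrite (proj2 (Halloc Void) eq_refl) in Ho; discriminate.
Qed.

Lemma sc_invariant_create h x :
  sc_invariant h -> alloc h x = false -> sc_invariant (create_heap Void h x).
Proof.
  intros I Hx; constructor; simpl.
  - intros o Ho; destruct (classic (o = x)) as [->|Hne].
    { rewrite ite_eq_same in Ho; discriminate. }
    rewrite ite_eq_other in Ho by exact Hne.
    apply (reads_inv (o := o) (h := h)); [|exact (closed_inv I o Ho)].
    intros y Hr; pose proof (reads_closed_allocated I Ho Hr) as Hy.
    apply create_heap_same_obj; congruence.
  - intros o p Hp Hown; destruct (classic (p = x)) as [->|Hne].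
    { rewrite ite_eq_same in Hp; discriminate. }
    rewrite ite_eq_other in Hp by exact Hne.
    destruct (closed_owns I o p Hp Hown) as [Ho Howner].
    pose proof (unallocated_open I x Hx) as Hxo; unfold is_open in Hxo.
    rewrite !ite_eq_other by congruence; auto.
  - intros o Ho; unfold is_open; simpl.
    destruct (classic (o = x)) as [->|Hne]; [apply ite_eq_same|].
    rewrite ite_eq_other in Ho by exact Hne; rewrite ite_eq_other by exact Hne.
    exact (unallocated_open I o Ho).
  - intros o Ho p; destruct (classic (o = x)) as [->|Hne].
    { rewrite ite_eq_same; auto. }
    rewrite ite_eq_other in Ho by exact Hne; rewrite ite_eq_other by exact Hne.
    exact (unallocated_unobserved I o Ho p).
Qed.

Lemma sc_invariant_unwrap h x :
  sc_invariant h -> is_wrapped h x -> sc_invariant (unwrap_heap h x).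
Proof.
  intros I [_ Hfree]; constructor.
  - intros o Ho; apply closed_unwrap_heap in Ho.
    apply (closed_inv_change_closed_owner (h := h)); [repeat split|exact (closed_inv I o Ho)].
  - intros o p Hp Hown; apply closed_unwrap_heap in Hp.
    destruct (closed_owns I o p Hp Hown) as [Ho Howner]; simpl.
    (* [x] is free, so it is not owned by the closed [p] *)
    assert (o <> x) by (intros ->; unfold is_free, is_open in Hfree; congruence).
    rewrite ite_eq_other by assumption; auto.
  - intros o Ho; unfold is_open; simpl.
    destruct (classic (o = x)) as [->|Hne]; [apply ite_eq_same|].
    rewrite ite_eq_other by exact Hne; exact (unallocated_open I o Ho).
  - exact (unallocated_unobserved I).
Qed.

Lemma sc_invariant_update h x u :
  sc_invariant h -> alloc h x = true -> is_open h x ->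
  (forall o, observers h x o -> is_open h o \/ guard h x u o) ->
  sc_invariant (set_attr h x u).
Proof.
  intros I Hxalloc Hx Hguard; unfold is_open in Hx.
  constructor; unfold is_open; rewrite ?set_attr_closed, ?set_attr_owner, ?set_attr_alloc.
  - intros o Ho; pose proof (closed_inv I o Ho) as Hinv.
    destruct (inv_admissible o) as [_ [A2 [A3 _]]].
    destruct (classic (subjects h o x)) as [Hsub|Hsub].
    + apply A3; auto.
      destruct (Hguard o (A2 h Hinv x Hsub)) as [Hopen|]; auto.
      unfold is_open in Hopen; congruence.
    + apply (reads_inv (o := o) (h := h)); auto.
      intros y Hr; apply set_attr_same_obj; intros ->.
      destruct (reads_closed I Ho Hr) as [->|[Hc|[Hs _]]]; congruence.
  - intros o p Hp; rewrite set_attr_owns_other by congruence.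
    exact (closed_owns I o p Hp).
  - exact (unallocated_open I).
  - intros o Ho; rewrite set_attr_observers_other by congruence.
    exact (unallocated_unobserved I o Ho).
Qed.

Lemma sc_invariant_wrap h x :
  sc_invariant h -> alloc h x = true -> inv x h ->
  (forall o, owns h x o -> is_wrapped h o) ->
  sc_invariant (wrap_heap h x).
Proof.
  intros I Hxalloc Hinv Hwrapped; constructor.
  - intros o Ho; apply (closed_inv_change_closed_owner (h := h)); [repeat split|].
    destruct (closed_wrap_heap Ho) as [->|Ho']; auto.
    exact (closed_inv I o Ho').
  - intros o p Hp Hown; simpl.
    destruct (excluded_middle_informative (owns h x o)) as [Hxo|Hxo].
    + (* [o] was free, so its owner [p] cannot have been closed unless [p = x] *)
      destruct (Hwrapped o Hxo) as [Ho Hfree]; unfold is_free, is_open in Hfree.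
      destruct (closed_wrap_heap Hp) as [->|Hp'].
      * unfold ite_eq; destruct (excluded_middle_informative (o = x)); auto.
      * destruct (closed_owns I o p Hp' Hown) as [_ Howner]; congruence.
    + destruct (closed_wrap_heap Hp) as [->|Hp']; [contradiction|].
      destruct (closed_owns I o p Hp' Hown) as [Ho Howner].
      unfold ite_eq; destruct (excluded_middle_informative (o = x)); auto.
  - intros o Ho; unfold is_open; simpl in *.
    assert (o <> x) by congruence.
    rewrite ite_eq_other by assumption; exact (unallocated_open I o Ho).
  - exact (unallocated_unobserved I).
Qed.

Lemma sc_invariant_step h h' :
  sc_invariant h -> step Void inv guard h h' -> sc_invariant h'.
Proof.
  intros I St; destruct St.
  - apply sc_invariant_create; assumption.
  - apply sc_invariant_unwrap; assumption.
  - apply sc_invariant_update; assumption.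
  - apply sc_invariant_wrap; assumption.
Qed.

Lemma sc_invariant_reachable h : reachable Void inv guard h -> sc_invariant h.
Proof.
  induction 1 as [h Hinit|h h' _ IH St].
  - exact (sc_invariant_initial Hinit).
  - exact (sc_invariant_step IH St).
Qed.

End Soundness.

Theorem proposition1 (Obj F V : Type) (Void : Obj)
    (inv : Obj -> heap Obj F V -> Prop)
    (reads : Obj -> heap Obj F V -> Obj -> Prop)
    (guard : heap Obj F V -> Obj -> upd Obj F V -> Obj -> Prop) :
  reads_sound inv reads ->
  (forall o, admissible inv reads guard o) ->
  forall h, reachable Void inv guard h ->
    (forall o, closed h o = true -> inv o h) /\
    (forall o p, closed h p = true -> owns h p o ->
       closed h o = true /\ owner h o = p).
Proof.
  intros reads_inv inv_admissible h Hreach.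
  pose proof (sc_invariant_reachable reads_inv inv_admissible Hreach) as I.
  exact (conj (closed_inv I) (closed_owns I)).
Qed.
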